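(* Let $X, Y, Z, W$ be Polish spaces, let $P: X \rightsquigarrow Y$ and $Q: Y \rightsquigarrow Z$ be tight Feller kernels, and let $S \subseteq Z \times W$ be closed. For risk budgets $\delta, \epsilon \ge 0$ with $\delta + \epsilon < 1$, $$P^{*,\delta}(Q^{*,\epsilon} S) \subseteq (Q \circ P)^{*,\delta+\epsilon} S.$$
   Context: A Markov kernel $P: X \rightsquigarrow Y$ assigns to each $x$ a Borel probability measure $P(x,\cdot)$ on $Y$ with $x \mapsto P(x,A)$ measurable for each Borel $A$. It is Feller if $x \mapsto \int \phi(y)\,P(x,dy)$ is continuous for every bounded continuous $\phi$, and tight if for every compact $K \subseteq X$ and $\eta > 0$ there is a compact $L \subseteq Y$ with $P(x,L) \ge 1-\eta$ for all $x \in K$. Composition: $(Q \circ P)(x,C) = \int_Y Q(y,C)\,P(x,dy)$. For a relation $S \subseteq Y \times Z$ and $\epsilon \in [0,1)$, the $\epsilon$-pullback along $P$ is $P^{*,\epsilon} S = \{(x,z) \in X \times Z : P(x, S_z) \ge 1-\epsilon\}$, where $S_z = \{y : (y,z) \in S\}$. *)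

From HB Require Import structures.
From mathcomp Require Import all_boot all_order all_algebra.
From mathcomp Require Import all_classical all_reals all_analysis measurable_realfun.
Set Implicit Arguments.
Unset Strict Implicit.
Unset Printing Implicit Defensive.
Import Order.TTheory GRing.Theory Num.Theory.
Import numFieldNormedType.Exports.
Local Open Scope classical_set_scope.
Local Open Scope ring_scope.

Notation Borel T := (g_sigma_algebraType (@open T)) (only parsing).

Definition Polish (R : realType) (T : ptopologicalType) : Prop :=
  exists d : T -> T -> R,
    [/\ ((forall x y, 0 <= d x y) /\
        (forall x y, d x y = 0 <-> x = y) /\
        (forall x y, d x y = d y x) /\
        (forall x y z, d x z <= d x y + d y z) /\
        (forall A : set T, open A <->
           (forall x, A x -> exists2 e : R, 0 < e & [set y | d x y < e] `<=` A))),
        (forall u : nat -> T,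
           (forall e : R, 0 < e -> exists N, forall m n, (N <= m)%N -> (N <= n)%N ->
              d (u m) (u n) < e) ->
           exists l, forall e : R, 0 < e -> exists N, forall n, (N <= n)%N -> d (u n) l < e)
      &
        (exists D : set T, countable D /\
           forall x (e : R), 0 < e -> exists2 y, D y & d x y < e)].

Definition markov_kernel (R : realType) (X Y : ptopologicalType)
    (P : X -> probability (Borel Y) R) : Prop :=
  forall A : set (Borel Y), measurable A ->
    measurable_fun (setT : set (Borel X)) (fun x : Borel X => (P x A : \bar R)).

Definition feller (R : realType) (X Y : ptopologicalType)
    (P : X -> probability (Borel Y) R) : Prop :=
  forall phi : Y -> R, continuous phi -> (exists M : R, forall y, `|phi y| <= M) ->
    continuous (fun x : X => Rintegral (P x) (setT : set (Borel Y)) phi).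

Definition tight (R : realType) (X Y : ptopologicalType)
    (P : X -> probability (Borel Y) R) : Prop :=
  forall K : set X, compact K -> forall eta : R, 0 < eta ->
    exists2 L : set Y, compact L &
      forall x, K x -> ((1 - eta)%:E <= P x L)%E.

Definition kcompose (R : realType) (X Y Z : ptopologicalType)
    (P : X -> probability (Borel Y) R) (Q : Y -> probability (Borel Z) R) :
    X -> set Z -> \bar R :=
  fun x C => (\int[P x]_(y in (setT : set (Borel Y))) Q y C)%E.

Definition pullback (R : realType) (X Y Z : Type) (k : X -> set Y -> \bar R)
    (eps : R) (S : set (Y * Z)) : set (X * Z) :=
  [set xz | ((1 - eps)%:E <= k xz.1 [set y | S (y, xz.2)])%E].

From HB Require Import structures.
From mathcomp Require Import all_boot all_order all_algebra.
From mathcomp Require Import all_classical all_reals all_analysis measurable_realfun.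
From mathcomp Require Import lra.
Import Order.TTheory GRing.Theory Num.Theory.
Local Open Scope classical_set_scope.
Local Open Scope ring_scope.

(* If [P x] gives mass at least [1 - delta] to the set [A] of points [y] with
   [Q y S_w >= 1 - eps], then integrating [y |-> Q y S_w] over [A] alone gives
   [(Q o P) x S_w >= (1 - eps) (1 - delta) >= 1 - delta - eps]. Closedness of [S]
   is only used to make the sections [S_w] Borel. *)

Lemma closed_Borel_measurable {T : ptopologicalType} (C : set T) :
  closed C -> measurable (C : set (Borel T)).
Proof.
move=> cC; rewrite -[C]setCK; apply: measurableC.
by apply: sub_sigma_algebra; exact: closed_openC.
Qed.

Lemma closed_section {T U : topologicalType} (S : set (T * U)) (u : U) :
  closed S -> closed [set t | S (t, u)].
Proof.
move=> cS; have -> : [set t | S (t, u)] = (fun t => (t, u)) @^-1` S by [].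
apply: (continuous_closedP _).1 cS => t.
by apply: cvg_pair; [exact: cvg_id | exact: cvg_cst].
Qed.

Lemma mule_measure_le_integral d (T : measurableType d) (R : realType)
    (mu : {measure set T -> \bar R}) (A : set T) (f : T -> \bar R) (a : R) :
  measurable A -> measurable_fun setT f -> 0 <= a ->
  (forall t, (0 <= f t)%E) -> (forall t, A t -> (a%:E <= f t)%E) ->
  (a%:E * mu A <= \int[mu]_t f t)%E.
Proof.
move=> mA mf a0 f0 Af; rewrite -integral_cst //.
apply: (@le_trans _ _ (\int[mu]_(t in A) f t)%E).
  by apply: ge0_le_integral => //; exact: measurable_funS mf.
exact: ge0_subset_integral.
Qed.

Lemma pullback_kcompose_sub (R : realType) (X Y Z W : ptopologicalType)
    (P : X -> probability (Borel Y) R) (Q : Y -> probability (Borel Z) R)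
    (S : set (Z * W)) (delta eps : R) :
  markov_kernel Q -> (forall w, measurable ([set z | S (z, w)] : set (Borel Z))) ->
  0 <= delta -> 0 <= eps -> delta + eps <= 1 ->
  pullback (fun x (A : set Y) => (P x A : \bar R)) delta
           (pullback (fun y (A : set Z) => (Q y A : \bar R)) eps S)
  `<=` pullback (kcompose P Q) (delta + eps) S.
Proof.
move=> mQ mS d0 e0 de1 [x w]; rewrite /pullback /kcompose /= => PxA.
set C := [set z | S (z, w)] in PxA *.
have mQC := mQ C (mS w).
set A := [set y | ((1 - eps)%:E <= (Q y C : \bar R))%E] in PxA.
have mA : measurable (A : set (Borel Y)).
  by rewrite -[A]setTI; exact: emeasurable_fun_c_infty.
have QC_ge : ((1 - eps)%:E * P x A <= \int[P x]_y (Q y C : \bar R))%E.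
  by apply: mule_measure_le_integral => //; rewrite subr_ge0; lra.
apply: le_trans QC_ge; apply: (@le_trans _ _ ((1 - eps) * (1 - delta))%:E).
  by rewrite lee_fin; nra.
by rewrite EFinM; apply: lee_pmul => //; rewrite lee_fin; lra.
Qed.

Theorem mainTheorem15 (R : realType) (X Y Z W : ptopologicalType)
    (P : X -> probability (Borel Y) R) (Q : Y -> probability (Borel Z) R)
    (S : set (Z * W)) (delta eps : R) :
  Polish R X -> Polish R Y -> Polish R Z -> Polish R W ->
  markov_kernel P -> feller P -> tight P ->
  markov_kernel Q -> feller Q -> tight Q ->
  closed S ->
  0 <= delta -> 0 <= eps -> delta + eps < 1 ->
  pullback (fun x (A : set Y) => (P x A : \bar R)) delta
           (pullback (fun y (A : set Z) => (Q y A : \bar R)) eps S)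
  `<=` pullback (kcompose P Q) (delta + eps) S.
Proof.
move=> _ _ _ _ _ _ _ mQ _ _ cS d0 e0 de1.
have mS w : measurable ([set z | S (z, w)] : set (Borel Z)).
  exact: closed_Borel_measurable _ (closed_section _ w cS).
exact: pullback_kcompose_sub (ltW de1).
Qed.
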